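(* Let $n\ge 2$ and let $\mathsf{M}$ be a square submatrix of a matrix in $\mathscr{D}_n$. Then $$|\det\mathsf{M}|\in\{0,2^0,2^1,\dots,2^{\lfloor n/2\rfloor}\}.$$
   Context: Let $e_1,\dots,e_n$ be the standard basis of $\mathbb{R}^n$ and $[\pm n]=\{-n,\dots,-1,1,\dots,n\}$. For $i\in[n-1]$ and $r\in[\pm n]$ with $i<|r|$, set $d(i,r)=e_i+\mathrm{sgn}(r)\,e_{|r|}\in\mathbb{R}^n$. $\mathscr{D}_n$ denotes the set of $n\times n$ real matrices each of whose rows is of the form $d(i,r)$ for some such $i,r$ (rows may repeat). A square submatrix is obtained by deleting some rows and the same number of columns. *)

From HB Require Import structures.
From mathcomp Require Import all_boot all_order all_algebra.
Set Implicit Arguments. Unset Strict Implicit. Unset Printing Implicit Defensive.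
Import Order.TTheory GRing.Theory Num.Theory.
Local Open Scope ring_scope.

(* 0-based indices: the paper's d(i,r) with 1 <= i < |r| <= n corresponds to
   i' = i-1 < j' = |r|-1 (as ordinals of 'I_n), sign s = (r < 0). *)
Definition dvec (R : nzRingType) (n : nat) (i j : 'I_n) (s : bool) : 'rV[R]_n :=
  \row_k ((k == i)%:R + (-1) ^+ s * (k == j)%:R).

Definition in_Dn (R : nzRingType) (n : nat) (A : 'M[R]_n) : Prop :=
  forall a : 'I_n, exists (i j : 'I_n) (s : bool),
    (i < j)%N /\ row a A = dvec R i j s.

(* square submatrix of A of size k: rows f, columns g, both strictly increasing
   (i.e. obtained by deleting rows/columns, order preserved). *)
Definition strict_incr (k n : nat) (f : 'I_k -> 'I_n) : Prop :=
  forall a b : 'I_k, (a < b)%N -> (f a < f b)%N.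

From HB Require Import structures.
From mathcomp Require Import all_boot all_order all_algebra.
Import Order.TTheory GRing.Theory Num.Theory.
Local Open Scope ring_scope.

(* Every square submatrix of a matrix in D_n is a "two-sparse" matrix: its
   entries lie in {0, 1, -1} and each row has at most two nonzero entries
   (a row d(i,r) has its nonzero entries in columns i and |r|, and deleting
   columns cannot create new ones).  The heart of the file is the theorem
   [two_sparse_det]: a k x k two-sparse matrix has determinant 0 or of absolute
   value 2^e with 2e <= k.  It is proved by induction on k, and for fixed k by
   induction on the number of nonzero entries of the first column:
   - if that column has at most one nonzero entry, expand along it and use the
     bound for size k-1;
   - if two rows r1, r2 are nonzero in column 0 and share another nonzero
     column j, then both rows are supported on {0, j}; subtracting a multiple
     of r1 from r2 leaves r2 with a single entry of absolute value 0 or 2, and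
     after expanding along r2 the row r1 has a single nonzero entry, so two
     expansions give a factor in {0, 2} times a minor of size k-2;
   - otherwise the same row operation keeps the matrix two-sparse and removes
     one nonzero entry from column 0.
   Since a k x k submatrix of an n x n matrix has k <= n, we get e <= n/2. *)

Section DetFacts.
Set Implicit Arguments. Unset Strict Implicit.
Variable R : comNzRingType.

Lemma det_single_col n (M : 'M[R]_n) r j :
  (forall i, i != r -> M i j = 0) -> \det M = M r j * cofactor M r j.
Proof.
move=> Mj0; rewrite (expand_det_col _ j) (bigD1 r) //= big1 ?addr0 //.
by move=> i /Mj0 ->; rewrite mul0r.
Qed.

Lemma det_single_row n (M : 'M[R]_n) r j :
  (forall l, l != j -> M r l = 0) -> \det M = M r j * cofactor M r j.
Proof.
move=> Mr0; rewrite (expand_det_row _ r) (bigD1 j) //= big1 ?addr0 //.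
by move=> l /Mr0 ->; rewrite mul0r.
Qed.

Definition row_elim n (M : 'M[R]_n) (r1 r2 : 'I_n) (t : R) : 'M[R]_n :=
  \matrix_(i, j) if i == r2 then M r2 j - t * M r1 j else M i j.

Lemma det_row_elim n (M : 'M[R]_n) r1 r2 t :
  r1 != r2 -> \det (row_elim M r1 r2 t) = \det M.
Proof.
move=> r12.
pose C := \matrix_(i, j) if i == r2 then M r1 j else M i j.
have detC : \det C = 0.
  by apply: (determinant_alternate r12) => j; rewrite !mxE eqxx (negbTE r12).
rewrite (@determinant_multilinear _ _ _ M C r2 1 (- t)).
- by rewrite detC mulr0 addr0 mul1r.
- by apply/rowP => j; rewrite !mxE eqxx mul1r mulNr.
- by apply/matrixP => i j; rewrite !mxE eq_sym (negbTE (neq_lift _ _)).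
- by apply/matrixP => i j; rewrite !mxE eq_sym (negbTE (neq_lift _ _)).
Qed.

Lemma row_elim_minor n (M : 'M[R]_n.+1) r1 r2 t j :
  row' r2 (col' j (row_elim M r1 r2 t)) = row' r2 (col' j M).
Proof. by apply/matrixP => a b; rewrite !mxE eq_sym (negbTE (neq_lift _ _)). Qed.

End DetFacts.

Section TwoSparse.
Set Implicit Arguments. Unset Strict Implicit.
Variable R : numDomainType.

Definition trit (x : R) : bool := [|| x == 0, x == 1 | x == -1].

Lemma trit_sign n : trit ((-1) ^+ n).
Proof.
by rewrite -signr_odd /trit; case: (odd n); rewrite ?expr1 ?expr0 eqxx !orbT.
Qed.

Lemma tritN x : trit x -> trit (- x).
Proof. by case/or3P => /eqP ->; rewrite /trit ?oppr0 ?opprK eqxx ?orbT. Qed.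

Lemma tritM x y : trit x -> trit y -> trit (x * y).
Proof.
case/or3P => /eqP -> ty; rewrite ?mul0r ?mul1r ?mulN1r //.
  by rewrite /trit eqxx.
exact: tritN.
Qed.

(* A nonzero entry is its own inverse; this lets a row operation clear a pivot. *)
Lemma trit_sqr x : trit x -> x != 0 -> x * x = 1.
Proof. by case/or3P => /eqP ->; rewrite ?eqxx // ?mulr1 ?mulrNN ?mulr1. Qed.

(* Difference of two nonzero entries: the only source of a factor 2. *)
Lemma trit_norm_sub x y : trit x -> trit y -> x != 0 -> y != 0 ->
  `|x - y| = 0 \/ `|x - y| = 2.
Proof.
case/or3P => /eqP -> /or3P[] /eqP ->; rewrite ?eqxx // => _ _;
  rewrite ?subrr ?normr0; [by left | right | right | by left].
  by rewrite opprK ger0_norm // addr_ge0 ?ler01.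
by rewrite -opprD normrN ger0_norm // addr_ge0 ?ler01.
Qed.

Definition pow2_bounded (k : nat) (d : R) : Prop :=
  `|d| = 0 \/ exists e : nat, (e.*2 <= k)%N /\ `|d| = 2 ^+ e.

Lemma pow2_bounded_mono k k' d :
  (k <= k')%N -> pow2_bounded k d -> pow2_bounded k' d.
Proof.
move=> lekk' [d0|[e [lee de]]]; [by left | right; exists e].
by rewrite (leq_trans lee lekk').
Qed.

Lemma pow2_bounded_trit k x d :
  trit x -> pow2_bounded k d -> pow2_bounded k (x * d).
Proof.
case/or3P => /eqP ->; rewrite ?mul0r ?mul1r ?mulN1r.
- by left; rewrite normr0.
- by [].
- by rewrite /pow2_bounded normrN.
Qed.

Lemma pow2_bounded_two k x d : `|x| = 0 \/ `|x| = 2 ->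
  pow2_bounded k d -> pow2_bounded k.+2 (x * d).
Proof.
move=> hx [d0|[e [lee de]]]; first by left; rewrite normrM d0 mulr0.
case: hx => hx; first by left; rewrite normrM hx mul0r.
by right; exists e.+1; rewrite doubleS !ltnS lee normrM hx de exprS.
Qed.

Definition row_supp (k : nat) (M : 'M[R]_k) (i : 'I_k) : {set 'I_k} :=
  [set j | M i j != 0].

Definition two_sparse (k : nat) (M : 'M[R]_k) : Prop :=
  (forall i j, trit (M i j)) /\ (forall i, #|row_supp M i| <= 2)%N.

Lemma two_sparse_mxsub k k' (f g : 'I_k' -> 'I_k) (M : 'M[R]_k) :
  injective g -> two_sparse M -> two_sparse (mxsub f g M).
Proof.
move=> inj_g [M_trit M_supp]; split=> [i j|i]; first by rewrite mxE.
rewrite -(card_imset _ inj_g); apply: leq_trans (M_supp (f i)).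
apply/subset_leq_card/subsetP => _ /imsetP[j + ->].
by rewrite !inE mxE.
Qed.

Lemma two_sparse_minor k (M : 'M[R]_k.+1) r j :
  two_sparse M -> two_sparse (row' r (col' j M)).
Proof.
have -> : row' r (col' j M) = mxsub (lift r) (lift j) M.
  by apply/matrixP => a b; rewrite !mxE.
exact/two_sparse_mxsub/lift_inj.
Qed.

Lemma two_sparse_row_zero k (M : 'M[R]_k) r a b l : two_sparse M -> a != b ->
  M r a != 0 -> M r b != 0 -> l != a -> l != b -> M r l = 0.
Proof.
move=> [_ M_supp] ab ra rb la lb; apply/eqP; apply: contraT => rl.
have : (3 <= #|row_supp M r|)%N.
  rewrite (cardsD1 a) (cardsD1 b) (cardsD1 l) !inE ra rb rl eq_sym ab la lb.
  by rewrite !add1n.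
by rewrite leqNgt ltnS M_supp.
Qed.

Lemma row_elim_pivot k (M : 'M[R]_k) r1 r2 j0 :
  trit (M r1 j0) -> M r1 j0 != 0 ->
  row_elim M r1 r2 (M r2 j0 * M r1 j0) r2 j0 = 0.
Proof. by move=> tr nz; rewrite mxE eqxx -mulrA trit_sqr // mulr1 subrr. Qed.

(* If rows r1, r2 share only the pivot column j0, clearing the pivot keeps the
   matrix two-sparse: the new row r2 lives on the two supports minus j0. *)
Lemma two_sparse_row_elim k (M : 'M[R]_k) r1 r2 j0 :
  two_sparse M -> r1 != r2 -> M r1 j0 != 0 -> M r2 j0 != 0 ->
  (forall j, j != j0 -> M r1 j = 0 \/ M r2 j = 0) ->
  two_sparse (row_elim M r1 r2 (M r2 j0 * M r1 j0)).
Proof.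
move=> sM r12 r1j0 r2j0 disj; have [M_trit M_supp] := sM.
set t := M r2 j0 * M r1 j0; set M' := row_elim M r1 r2 t.
have M'_pivot : M' r2 j0 = 0 by apply: row_elim_pivot.
have M'_other i : i != r2 -> row_supp M' i = row_supp M i.
  by move=> /negbTE ir2; apply/setP => l; rewrite !inE mxE ir2.
have supp_le1 r : M r j0 != 0 -> (#|row_supp M r :\ j0| <= 1)%N.
  by move=> rj0; have := M_supp r; rewrite (cardsD1 j0) inE rj0.
split=> [i l|i].
  have [->|ir2] := eqVneq i r2; last by rewrite mxE (negbTE ir2).
  have [->|lj0] := eqVneq l j0; first by rewrite M'_pivot /trit eqxx.
  rewrite mxE eqxx; case: (disj l lj0) => ->; rewrite ?mulr0 ?subr0 //.
  by rewrite sub0r; apply/tritN/tritM => //; apply: tritM.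
have [->|ir2] := eqVneq i r2; last by rewrite M'_other.
have supp_r2 :
    row_supp M' r2 \subset (row_supp M r1 :\ j0) :|: (row_supp M r2 :\ j0).
  apply/subsetP => l; rewrite !inE.
  have [->|lj0] := eqVneq l j0; first by rewrite M'_pivot eqxx.
  rewrite /=; apply: contraR; rewrite negb_or !negbK => /andP[/eqP z1 /eqP z2].
  by rewrite mxE eqxx z1 z2 mulr0 subr0.
apply: leq_trans (subset_leq_card supp_r2) _.
apply: leq_trans (leq_card_setU _ _) _.
by rewrite -[2%N]/(1 + 1)%N leq_add ?supp_le1.
Qed.

Definition det_bound (k : nat) : Prop :=
  forall M : 'M[R]_k, two_sparse M -> pow2_bounded k (\det M).

Lemma pow2_bounded_cofactor k (M : 'M[R]_k.+1) r j :
  det_bound k -> two_sparse M -> pow2_bounded k (cofactor M r j).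
Proof.
by move=> IHk sM; apply/pow2_bounded_trit/IHk/two_sparse_minor/sM/trit_sign.
Qed.

Lemma det_bound_single_pivot k (M : 'M[R]_k.+1) r j :
  det_bound k -> two_sparse M -> (forall i, i != r -> M i j = 0) ->
  pow2_bounded k (\det M).
Proof.
move=> IHk sM Mj0; rewrite (det_single_col Mj0).
by apply: pow2_bounded_trit (sM.1 _ _) (pow2_bounded_cofactor _ _ IHk sM).
Qed.

(* Clearing (r2, j0)
   leaves row r2 with a single entry of absolute value 0 or 2, and in the
   remaining minor row r1 has a single nonzero entry. *)
Lemma det_bound_shared_pivot k (M : 'M[R]_k.+2) r1 r2 j0 j :
  det_bound k -> two_sparse M -> r1 != r2 -> j0 != j ->
  M r1 j0 != 0 -> M r1 j != 0 -> M r2 j0 != 0 -> M r2 j != 0 ->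
  pow2_bounded k.+2 (\det M).
Proof.
move=> IHk sM r12 j0j r1j0 r1j r2j0 r2j; have [M_trit _] := sM.
set t := M r2 j0 * M r1 j0; set M' := row_elim M r1 r2 t.
have M'r2 l : l != j -> M' r2 l = 0.
  have [-> _|lj0 lj] := eqVneq l j0; first exact: row_elim_pivot.
  rewrite mxE eqxx (two_sparse_row_zero sM j0j r1j0 r1j) //.
  by rewrite (two_sparse_row_zero sM j0j r2j0 r2j) // mulr0 subr0.
have M'r2j : `|M' r2 j| = 0 \/ `|M' r2 j| = 2.
  rewrite mxE eqxx; apply: trit_norm_sub => //; first by rewrite !tritM.
  by rewrite !mulf_neq0.
rewrite -(det_row_elim M t r12) (det_single_row M'r2) /cofactor.
apply: (pow2_bounded_two M'r2j); apply: pow2_bounded_trit (trit_sign _) _.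
rewrite row_elim_minor; set N := row' r2 (col' j M).
case: (unliftP r2 r1) => [i1 r1E|r21]; last by rewrite r21 eqxx in r12.
case: (unliftP j j0) => [l0 j0E|j0E]; last by rewrite j0E eqxx in j0j.
have Ni1 l : l != l0 -> N i1 l = 0.
  move=> ll0; rewrite !mxE -r1E (two_sparse_row_zero sM j0j r1j0 r1j) //.
    by rewrite j0E (inj_eq lift_inj).
  by rewrite eq_sym neq_lift.
rewrite (det_single_row Ni1); apply: pow2_bounded_trit.
  by rewrite !mxE -r1E -j0E.
exact/pow2_bounded_cofactor/two_sparse_minor.
Qed.

Lemma det_bound_step k : det_bound k -> det_bound k.+1 -> det_bound k.+2.
Proof.
move=> IHk IHk1 M; have [m] := ubnP #|[set i | M i ord0 != 0]|.
elim: m M => // m IHm M lt_m sM.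
have single r : (forall i, i != r -> M i ord0 = 0) -> pow2_bounded k.+2 (\det M).
  by move=> Mr0; apply/(pow2_bounded_mono (leqnSn _))/det_bound_single_pivot/Mr0.
have [r1 /= r1j0|col0] := pickP [pred r | M r ord0 != 0]; last first.
  by apply: (single ord0) => i _; apply/eqP/negbFE/col0.
have [r2 /andP[r21 r2j0]|only_r1] :=
  pickP [pred r | (r != r1) && (M r ord0 != 0)]; last first.
  apply: (single r1) => i ir1; apply/eqP/negbFE.
  by move: (only_r1 i); rewrite /= ir1.
have r12 : r1 != r2 by rewrite eq_sym.
have [j /and3P[j0 r1j r2j]|disj] :=
  pickP [pred j | [&& j != ord0, M r1 j != 0 & M r2 j != 0]].
  apply: (det_bound_shared_pivot IHk sM r12 (_ : ord0 != j)) => //.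
  by rewrite eq_sym.
rewrite -(det_row_elim M (M r2 ord0 * M r1 ord0) r12); apply: IHm; last first.
  apply: two_sparse_row_elim => // j j0; have := disj j; rewrite /= j0 /=.
  by case: eqP => [|_ /eqP]; [left | right].
set M' := row_elim _ _ _ _.
have sub : [set i | M' i ord0 != 0] \subset [set i | M i ord0 != 0] :\ r2.
  apply/subsetP => i; rewrite !inE; have [->|ir2] := eqVneq i r2.
    by rewrite row_elim_pivot ?eqxx //; exact: sM.1.
  by rewrite mxE (negbTE ir2).
apply: leq_ltn_trans (subset_leq_card sub) _.
by move: lt_m; rewrite (cardsD1 r2) inE r2j0.
Qed.

Theorem two_sparse_det k : det_bound k.
Proof.
have det_bound0 : det_bound 0.
  by move=> M _; right; exists 0%N; rewrite det_mx00 normr1 expr0.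
suff : det_bound k /\ det_bound k.+1 by case.
elim: k => [|k [IHk IHk1]]; last by split=> //; apply: det_bound_step.
split=> // M sM; apply: (pow2_bounded_mono (leq0n 1)).
apply: (det_bound_single_pivot (r := ord0) (j := ord0)) => // i.
by rewrite ord1 eqxx.
Qed.

End TwoSparse.

Lemma in_Dn_two_sparse (R : numDomainType) n (A : 'M[R]_n) :
  in_Dn A -> two_sparse A.
Proof.
move=> hA; split=> [a c|a]; have [i [j [s [lt_ij rowA]]]] := hA a;
  have Aac l : A a l = dvec R i j s 0 l by rewrite -rowA mxE.
  rewrite Aac mxE; have [-> | ci] := eqVneq c i.
    have /negbTE -> : i != j by apply: contraTneq lt_ij => ->; rewrite ltnn.
    by rewrite /= mulr0 addr0 /trit eqxx orbT.
  have [_ | cj] := eqVneq c j; last by rewrite /= mulr0 addr0 /trit eqxx.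
  by rewrite /= add0r mulr1 -signr_odd /trit; case: (odd s); rewrite eqxx ?orbT.
have supp_ij : row_supp A a \subset [set i; j].
  apply/subsetP => c; rewrite !inE Aac mxE; apply: contraR.
  by rewrite negb_or => /andP[/negbTE -> /negbTE ->]; rewrite /= mulr0 addr0.
by apply: leq_trans (subset_leq_card supp_ij) _; rewrite cards2 ltnS leq_b1.
Qed.

Lemma strict_incr_inj k n (f : 'I_k -> 'I_n) : strict_incr f -> injective f.
Proof.
move=> hf a b fab; apply: val_inj; case: (ltngtP a b) => // /hf;
  by rewrite fab ltnn.
Qed.

Theorem mainTheorem4 (R : realFieldType) (n : nat) (hn : (2 <= n)%N)
  (A : 'M[R]_n) (hA : in_Dn A)
  (k : nat) (f g : 'I_k -> 'I_n) (hf : strict_incr f) (hg : strict_incr g) :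
  `|\det (mxsub f g A)| = 0 \/
  exists e : nat, (e <= n./2)%N /\ `|\det (mxsub f g A)| = 2 ^+ e.
Proof.
have inj_g := strict_incr_inj hg.
have le_kn : (k <= n)%N.
  by rewrite -[k]card_ord -[n]card_ord; exact: leq_card inj_g.
have sub_sparse := two_sparse_mxsub f inj_g (in_Dn_two_sparse hA).
case: (two_sparse_det sub_sparse) => [|[e [lee de]]]; [by left | right; exists e].
by split=> //; rewrite -(doubleK e) half_leq // (leq_trans lee le_kn).
Qed.
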